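(* Let $f:\{0,1\}^n\to\mathbb{R}$ have M\''obius expansion $f(\mathbf x)=\sum_{\mathbf k\le \mathbf x}F(\mathbf k)$. Let $\mathbf H\in\{0,1\}^{n\times t}$ and $\boldsymbol\ell\in\{0,1\}^t$, and define the query vector $\mathbf x=\neg(\mathbf H\cdot\neg\boldsymbol\ell)\in\{0,1\}^n$. Then $$f(\mathbf x)=\sum_{\mathbf k\in\{0,1\}^n:\ \mathbf H^\top\mathbf k\le \boldsymbol\ell}F(\mathbf k),$$ where the products $\mathbf H\cdot\neg\boldsymbol\ell$ and $\mathbf H^\top\mathbf k$ are computed over the Boolean semiring and $\le$ is componentwise.
   Context: Every function $f:\{0,1\}^n\to\mathbb{R}$ can be written uniquely as $f(\mathbf x)=\sum_{\mathbf k\in\{0,1\}^n,\ \mathbf k\le\mathbf x}F(\mathbf k)$ (real addition), where $\mathbf k\le\mathbf x$ means $k_i\le x_i$ for all $i$; the real numbers $F(\mathbf k)$ are the M\''obius coefficients of $f$. All operations between Boolean entries are over the Boolean semiring $(\{0,1\},\vee,\wedge)$: addition is logical OR and multiplication is logical AND, so e.g. $(\mathbf H^\top\mathbf k)_j=\bigvee_i H_{ij}\wedge k_i$. $\neg\mathbf a$ denotes bitwise negation of a binary vector $\mathbf a$. *)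

From HB Require Import structures.
From mathcomp Require Import all_boot all_order all_algebra.
From mathcomp Require Import reals.
Set Implicit Arguments. Unset Strict Implicit. Unset Printing Implicit Defensive.

Definition bvec (n : nat) := {ffun 'I_n -> bool}.

Definition ble (n : nat) (a b : bvec n) : bool := [forall i, a i ==> b i].

Definition bneg (n : nat) (a : bvec n) : bvec n := [ffun i => ~~ a i].

Definition bmulv (n t : nat) (H : 'M[bool]_(n, t)) (v : bvec t) : bvec n :=
  [ffun i => [exists j, H i j && v j]].

Definition bmulvT (n t : nat) (H : 'M[bool]_(n, t)) (k : bvec n) : bvec t :=
  [ffun j => [exists i, H i j && k i]].

From HB Require Import structures.
From mathcomp Require Import all_boot all_order all_algebra.
From mathcomp Require Import reals.
Local Open Scope ring_scope.

(* The Moebius expansion of f at x sums F over the down-set of x, so it suffices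
   that k <= ~(H ~l) and H^T k <= l define the same down-set: both say that
   k_i && H_ij implies l_j for all i, j, i.e. x |-> ~(H ~x) is the upper adjoint
   of k |-> H^T k for the componentwise order. *)

Section BooleanAdjunction.

Variables (n t : nat) (H : 'M[bool]_(n, t)).

Lemma ble_bmulvT (k : bvec n) (l : bvec t) :
  reflect (forall i j, k i -> H i j -> l j) (ble (bmulvT H k) l).
Proof.
apply: (iffP forallP) => [le_kl i j ki Hij | kHl j].
  by move: (le_kl j); rewrite ffunE => /implyP; apply; apply/existsP; exists i; rewrite Hij.
by rewrite ffunE; apply/implyP => /existsP [i /andP [Hij ki]]; apply: kHl Hij.
Qed.

Lemma ble_bneg_bmulv (k : bvec n) (l : bvec t) :
  reflect (forall i j, k i -> H i j -> l j) (ble k (bneg (bmulv H (bneg l)))).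
Proof.
apply: (iffP forallP) => [le_kl i j ki Hij | kHl i].
  move: (le_kl i); rewrite !ffunE ki /= => /existsPn /(_ j).
  by rewrite ffunE Hij negbK.
rewrite !ffunE; apply/implyP => ki; apply/existsPn => j.
by rewrite ffunE negb_and negbK -implybE; apply/implyP; apply: kHl.
Qed.

Lemma ble_bmulvT_bneg (k : bvec n) (l : bvec t) :
  ble (bmulvT H k) l = ble k (bneg (bmulv H (bneg l))).
Proof. exact/ble_bmulvT/ble_bneg_bmulv. Qed.

End BooleanAdjunction.

Theorem lemma1 (R : realType) (n t : nat)
  (f : bvec n -> R) (F : bvec n -> R)
  (hF : forall x : bvec n, f x = \sum_(k : bvec n | ble k x) F k)
  (H : 'M[bool]_(n, t)) (l : bvec t) :
  f (bneg (bmulv H (bneg l))) = \sum_(k : bvec n | ble (bmulvT H k) l) F k.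
Proof. by rewrite hF; apply: eq_bigl => k; rewrite ble_bmulvT_bneg. Qed.
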